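(* Suppose $\mathbf{X}=\mathbf{D}_1\boldsymbol{\Gamma}_1$, $\boldsymbol{\Gamma}_{i-1}=\mathbf{D}_i\boldsymbol{\Gamma}_i$ for $2\le i\le K$, all $\boldsymbol{\Gamma}_i\neq0$, and $\mathbf{Y}=\mathbf{X}+\mathbf{E}$ with $\|\mathbf{E}\|_{2,\infty}^{p}\le\epsilon_0$. Let $|\Gamma_i^{\min}|,|\Gamma_i^{\max}|$ be the smallest and largest absolute values of the nonzero entries of $\boldsymbol{\Gamma}_i$. Let $\hat{\boldsymbol{\Gamma}}_0=\mathbf{Y}$ and $\hat{\boldsymbol{\Gamma}}_i=\mathcal{S}_{\beta_i}(\mathbf{D}_i^T\hat{\boldsymbol{\Gamma}}_{i-1})$ for $1\le i\le K$ (layered soft thresholding). Define recursively $$\epsilon_i=\sqrt{\|\boldsymbol{\Gamma}_i\|_{0,\infty}^{p}}\,\big(\epsilon_{i-1}+\mu(\mathbf{D}_i)(\|\boldsymbol{\Gamma}_i\|_{0,\infty}^{s}-1)|\Gamma_i^{\max}|+\beta_i\big).$$ Assume that for all $1\le i\le K$: (a) $\|\boldsymbol{\Gamma}_i\|_{0,\infty}^{s}<\tfrac12\Big(1+\tfrac{1}{\mu(\mathbf{D}_i)}\tfrac{|\Gamma_i^{\min}|}{|\Gamma_i^{\max}|}\Big)-\tfrac{1}{\mu(\mathbf{D}_i)}\tfrac{\epsilon_{i-1}}{|\Gamma_i^{\max}|}$; and (b) $|\Gamma_i^{\min}|-(\|\boldsymbol{\Gamma}_i\|_{0,\infty}^{s}-1)\mu(\mathbf{D}_i)|\Gamma_i^{\max}|-\epsilon_{i-1}>\beta_i>\|\boldsymbol{\Gamma}_i\|_{0,\infty}^{s}\mu(\mathbf{D}_i)|\Gamma_i^{\max}|+\epsilon_{i-1}$.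 Then for all $1\le i\le K$: (1) the support of $\hat{\boldsymbol{\Gamma}}_i$ equals that of $\boldsymbol{\Gamma}_i$; and (2) $\|\boldsymbol{\Gamma}_i-\hat{\boldsymbol{\Gamma}}_i\|_{2,\infty}^{p}\le\epsilon_i$.
   Context: Setting. Signals are one-dimensional of length $N$ with periodic boundary conditions; $m_0=1$, $\boldsymbol{\Gamma}_0=\mathbf{X}$. For $i\ge1$, $\boldsymbol{\Gamma}_i\in\mathbb{R}^{Nm_i}$ has entry $km_i+r$ equal to the coefficient of filter $r$ at spatial shift $k$. $\mathbf{D}_i\in\mathbb{R}^{Nm_{i-1}\times Nm_i}$ is a (stride) convolutional dictionary whose column $km_i+r$ is local filter $r$ (length $n_{i-1}m_{i-1}$) placed cyclically on entries $km_{i-1},\dots,km_{i-1}+n_{i-1}m_{i-1}-1$, zero elsewhere. Columns have unit $\ell_2$ norm; $\mu(\mathbf{D})=\max_{i\neq j}|\mathbf{d}_i^T\mathbf{d}_j|$. Stripes: $\mathbf{S}_{i,j}\boldsymbol{\Gamma}_i$ is the subvector of $\boldsymbol{\Gamma}_i$ at spatial shifts $k\in\{j-n_{i-1}+1,\dots,j+n_{i-1}-1\}$ (mod $N$), all channels; $\|\boldsymbol{\Gamma}_i\|_{0,\infty}^{s}=\max_j\|\mathbf{S}_{i,j}\boldsymbol{\Gamma}_i\|_0$. Patches: for $i\ge0$, $\mathbf{P}_{i,j}\mathbf{V}$ extracts from $\mathbf{V}\in\mathbb{R}^{Nm_i}$ the cyclically contiguous subvector at spatial shifts $j,\dots,j+n_i-1$,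 all channels (length $n_im_i$); $\|\mathbf{V}\|_{2,\infty}^{p}=\max_j\|\mathbf{P}_{i,j}\mathbf{V}\|_2$, $\|\mathbf{V}\|_{0,\infty}^{p}=\max_j\|\mathbf{P}_{i,j}\mathbf{V}\|_0$. For $\boldsymbol{\Gamma}_K$ the patch size $n_K$ is an arbitrary fixed choice. Soft thresholding: $\mathcal{S}_\beta$ acts entrywise, $\mathcal{S}_\beta(z)=z+\beta$ if $z<-\beta$, $0$ if $|z|\le\beta$, $z-\beta$ if $z>\beta$. *)

(* classical reals R.  Vectors are functions nat -> R, only
   the entries with index < length are meaningful. *)
From Stdlib Require Import Reals Arith Bool.
Open Scope R_scope.

Fixpoint sumR (n : nat) (f : nat -> R) : R :=
  match n with O => 0 | S k => sumR k f + f k end.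

(* finite max of f 0 .. f (n-1), with 0 for the empty range
   (only applied to nonnegative quantities) *)
Fixpoint maxR (n : nat) (f : nat -> R) : R :=
  match n with O => 0 | S k => Rmax (maxR k f) (f k) end.

Fixpoint maxN (n : nat) (f : nat -> nat) : nat :=
  match n with O => O | S k => Nat.max (maxN k f) (f k) end.

Definition nz (V : nat -> R) (a : nat) : bool :=
  if Req_EM_T (V a) 0 then false else true.

Fixpoint cnt (n : nat) (P : nat -> bool) (V : nat -> R) : nat :=
  match n with
  | O => O
  | S k => cnt k P V + (if andb (P k) (nz V k) then 1 else 0)%nat
  end.

(* Index a of a vector in R^{N m} (m channels) has spatial shift a / m and
   channel a mod m. *)

(* a lies in patch P_{j}: spatial shift in {j, ..., j+n-1} (mod N) *)
Definition in_patch (N m n j a : nat) : bool :=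
  Nat.ltb ((a / m + N - j) mod N) n.

(* a lies in stripe S_{j}: spatial shift in {j-n+1, ..., j+n-1} (mod N) *)
Definition in_stripe (N m n j a : nat) : bool :=
  orb (Nat.ltb ((a / m + N - j) mod N) n) (Nat.ltb ((j + N - a / m) mod N) n).

Definition norm2p (N m n : nat) (V : nat -> R) : R :=
  maxR N (fun j => sqrt (sumR (N * m)
    (fun a => if in_patch N m n j a then V a ^ 2 else 0))).

Definition norm0p (N m n : nat) (V : nat -> R) : nat :=
  maxN N (fun j => cnt (N * m) (in_patch N m n j) V).

(* ||V||_{0,inf}^s, stripe half-width n (= n_{i-1} for Gamma_i) *)
Definition norm0s (N m n : nat) (V : nat -> R) : nat :=
  maxN N (fun j => cnt (N * m) (in_stripe N m n j) V).

Definition gmax (L : nat) (V : nat -> R) : R := maxR L (fun a => Rabs (V a)).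

Fixpoint minnz_aux (n : nat) (V : nat -> R) (init : R) : R :=
  match n with
  | O => init
  | S k => let r := minnz_aux k V init in
           if nz V k then Rmin (Rabs (V k)) r else r
  end.

(* smallest absolute value of the nonzero entries (meaningful when V <> 0) *)
Definition gmin (L : nat) (V : nat -> R) : R := minnz_aux L V (gmax L V).

(* mutual coherence of a dictionary D with Lr rows and Lc columns,
   D a c = entry in row a, column c *)
Definition mu (Lr Lc : nat) (D : nat -> nat -> R) : R :=
  maxR Lc (fun c => maxR Lc (fun c' =>
    if Nat.eqb c c' then 0 else Rabs (sumR Lr (fun a => D a c * D a c')))).

Definition apply_D (Lc : nat) (D : nat -> nat -> R) (G : nat -> R) : nat -> R :=
  fun a => sumR Lc (fun c => D a c * G c).
Definition apply_DT (Lr : nat) (D : nat -> nat -> R) (V : nat -> R) : nat -> R :=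
  fun c => sumR Lr (fun a => D a c * V a).

Definition unit_columns (Lr Lc : nat) (D : nat -> nat -> R) : Prop :=
  forall c, (c < Lc)%nat -> sumR Lr (fun a => D a c ^ 2) = 1.

(* (stride) convolutional dictionary D_i : R^{N m_i} -> R^{N m_{i-1}}:
   column k*mc + r is local filter r (length np*mp) placed cyclically on rows
   k*mp, ..., k*mp + np*mp - 1 (mod N*mp), zero elsewhere. *)
Definition conv_dict (N mp mc np : nat) (D : nat -> nat -> R) : Prop :=
  exists f : nat -> nat -> R,
    forall a c, (a < N * mp)%nat -> (c < N * mc)%nat ->
      D a c = (let k := (c / mc)%nat in
               let r := (c mod mc)%nat in
               let t := ((a + N * mp - k * mp) mod (N * mp))%nat in
               if Nat.ltb t (np * mp) then f r t else 0).

Definition soft (beta z : R) : R :=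
  if Rlt_dec z (- beta) then z + beta
  else if Rle_dec z beta then 0 else z - beta.

Fixpoint layered (N : nat) (m : nat -> nat) (D : nat -> nat -> nat -> R)
    (beta : nat -> R) (Y : nat -> R) (i : nat) : nat -> R :=
  match i with
  | O => Y
  | S k => fun c => soft (beta (S k))
             (apply_DT (N * m k) (D (S k)) (layered N m D beta Y k) c)
  end.

Fixpoint eps (N : nat) (m n : nat -> nat) (D : nat -> nat -> nat -> R)
    (beta : nat -> R) (Gamma : nat -> nat -> R) (eps0 : R) (i : nat) : R :=
  match i with
  | O => eps0
  | S k =>
      sqrt (INR (norm0p N (m (S k)) (n (S k)) (Gamma (S k)))) *
      (eps N m n D beta Gamma eps0 k
       + mu (N * m k) (N * m (S k)) (D (S k))
         * (INR (norm0s N (m (S k)) (n k) (Gamma (S k))) - 1)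
         * gmax (N * m (S k)) (Gamma (S k))
       + beta (S k))
  end.

From Pilot Require Import Defs.
From Stdlib Require Import Reals Arith Lra Lia.
Open Scope R_scope.

(* Write y = D^T (D Gamma + W) for one layer.  The columns of D having unit
   norm, y_c - Gamma_c is the interference sum_{c' <> c} <d_c, d_c'> Gamma_c'
   plus the noise <d_c, W>.  Only atoms whose supports overlap that of d_c,
   i.e. the atoms in the stripe of c, interfere, so the interference is at most
   mu |Gamma^max| (||Gamma||_{0,inf}^s - [Gamma_c <> 0]); by Cauchy-Schwarz the
   noise is at most the l2 norm of W on the patch carrying d_c, hence at most
   ||W||_{2,inf}^p.  Condition (b) puts beta strictly between the largest
   possible |y_c| off the support and the smallest possible |y_c| on it, so
   soft thresholding recovers the support, with entrywise error at most
   eps_{i-1} + mu (s - 1) |Gamma^max| + beta; a patch holds at most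
   ||Gamma||_{0,inf}^p nonzeros, which gives eps_i.  Induction on the layer,
   the error of layer i-1 being the noise of layer i, concludes.  Condition (a)
   only says that the interval prescribed for beta_i in (b) is nonempty. *)

Lemma sumR_ext n f g : (forall k, (k < n)%nat -> f k = g k) -> sumR n f = sumR n g.
Proof.
induction n as [|n IH]; simpl; intros H; [reflexivity|].
rewrite IH by (intros; apply H; lia). now rewrite H by lia.
Qed.

Lemma sumR_add n f g : sumR n (fun k => f k + g k) = sumR n f + sumR n g.
Proof. induction n as [|n IH]; simpl; [lra|]. rewrite IH; lra. Qed.

Lemma sumR_scal_l n c f : sumR n (fun k => c * f k) = c * sumR n f.
Proof. induction n as [|n IH]; simpl; [lra|]. rewrite IH; lra. Qed.

Lemma sumR_0 n : sumR n (fun _ => 0) = 0.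
Proof. induction n as [|n IH]; simpl; [lra|]. rewrite IH; lra. Qed.

Lemma sumR_comm n m F :
  sumR n (fun a => sumR m (fun b => F a b)) = sumR m (fun b => sumR n (fun a => F a b)).
Proof.
induction n as [|n IH]; simpl.
- now rewrite sumR_0.
- now rewrite IH, <- sumR_add.
Qed.

Lemma sumR_le n f g : (forall k, (k < n)%nat -> f k <= g k) -> sumR n f <= sumR n g.
Proof.
induction n as [|n IH]; simpl; intros H; [lra|].
pose proof (H n ltac:(lia)). pose proof (IH ltac:(intros; apply H; lia)). lra.
Qed.

Lemma Rabs_sumR_le n f : Rabs (sumR n f) <= sumR n (fun k => Rabs (f k)).
Proof.
induction n as [|n IH]; simpl; [rewrite Rabs_R0; lra|].
eapply Rle_trans; [apply Rabs_triang|]. lra.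
Qed.

Lemma sumR_D1 n f c : (c < n)%nat ->
  sumR n f = f c + sumR n (fun a => if Nat.eqb a c then 0 else f a).
Proof.
induction n as [|n IH]; intros Hc; [lia|]. simpl.
destruct (Nat.eq_dec c n) as [->|Hne].
- rewrite Nat.eqb_refl, (sumR_ext n (fun a => if Nat.eqb a n then 0 else f a) f); [lra|].
  intros k Hk. destruct (Nat.eqb_spec k n); [lia|reflexivity].
- rewrite IH by lia. destruct (Nat.eqb_spec n c); [lia|lra].
Qed.

Lemma nz_spec V a : nz V a = true <-> V a <> 0.
Proof. unfold nz; destruct (Req_EM_T (V a) 0); split; congruence. Qed.

Lemma nz_false V a : nz V a = false <-> V a = 0.
Proof. unfold nz; destruct (Req_EM_T (V a) 0); split; congruence. Qed.

Lemma sumR_cnt n P V x :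
  sumR n (fun a => if andb (P a) (nz V a) then x else 0) = INR (cnt n P V) * x.
Proof.
induction n as [|n IH]; simpl sumR; simpl cnt; [simpl; lra|]. rewrite IH.
destruct (andb (P n) (nz V n)); [rewrite plus_INR; simpl (INR 1)|rewrite Nat.add_0_r]; lra.
Qed.

Lemma le_maxR n f k : (k < n)%nat -> f k <= maxR n f.
Proof.
induction n as [|n IH]; intros Hk; [lia|]. simpl.
destruct (Nat.eq_dec k n) as [->|]; [apply Rmax_r|].
eapply Rle_trans; [apply IH; lia|apply Rmax_l].
Qed.

Lemma maxR_ge0 n f : 0 <= maxR n f.
Proof.
induction n as [|n IH]; simpl; [lra|]. eapply Rle_trans; [exact IH|apply Rmax_l].
Qed.

Lemma maxR_lub n f x : 0 <= x -> (forall k, (k < n)%nat -> f k <= x) -> maxR n f <= x.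
Proof. induction n as [|n IH]; simpl; intros; [lra|]. apply Rmax_lub; auto. Qed.

Lemma maxR_ext n f g : (forall k, (k < n)%nat -> f k = g k) -> maxR n f = maxR n g.
Proof.
induction n as [|n IH]; simpl; intros H; [reflexivity|].
rewrite IH by (intros; apply H; lia). now rewrite H by lia.
Qed.

Lemma le_maxN n f k : (k < n)%nat -> (f k <= Defs.maxN n f)%nat.
Proof.
induction n as [|n IH]; intros Hk; [lia|]. simpl.
destruct (Nat.eq_dec k n) as [->|]; [lia|]. specialize (IH ltac:(lia)). lia.
Qed.

Lemma minnz_aux_le L V init a : (a < L)%nat -> V a <> 0 -> minnz_aux L V init <= Rabs (V a).
Proof.
induction L as [|L IH]; intros Ha Va; [lia|]. simpl.
destruct (Nat.eq_dec a L) as [->|].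
- rewrite (proj2 (nz_spec V L) Va). apply Rmin_l.
- specialize (IH ltac:(lia) Va). destruct (nz V L); [|exact IH].
  eapply Rle_trans; [apply Rmin_r|exact IH].
Qed.

Lemma Rabs_le_gmax L V a : (a < L)%nat -> Rabs (V a) <= gmax L V.
Proof. intros. unfold gmax. apply (le_maxR L (fun a => Rabs (V a))); auto. Qed.

Definition gram (Lr : nat) (D : nat -> nat -> R) (c c' : nat) : R :=
  sumR Lr (fun a => D a c * D a c').

Lemma Rabs_gram_le_mu Lr Lc D c c' : (c < Lc)%nat -> (c' < Lc)%nat -> c <> c' ->
  Rabs (gram Lr D c c') <= mu Lr Lc D.
Proof.
intros. unfold mu.
eapply Rle_trans; [|apply (le_maxR Lc _ c); auto]. cbv beta.
eapply Rle_trans; [|apply (le_maxR Lc _ c'); auto]. cbv beta.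
destruct (Nat.eqb_spec c c'); [lia|apply Rle_refl].
Qed.

Lemma apply_DT_apply_D Lr Lc D G W H c :
  (forall a, (a < Lr)%nat -> H a = apply_D Lc D G a + W a) ->
  apply_DT Lr D H c =
    sumR Lc (fun c' => gram Lr D c c' * G c') + sumR Lr (fun a => D a c * W a).
Proof.
intros HH. unfold apply_DT, gram.
rewrite (sumR_ext _ _ (fun a => sumR Lc (fun c' => D a c * D a c' * G c') + D a c * W a)).
2:{ intros a Ha. rewrite HH by exact Ha. unfold apply_D.
    rewrite Rmult_plus_distr_l, <- sumR_scal_l.
    f_equal. apply sumR_ext; intros; ring. }
rewrite sumR_add, sumR_comm. f_equal. apply sumR_ext. intros c' _.
rewrite Rmult_comm, <- sumR_scal_l. apply sumR_ext; intros; ring.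
Qed.

Lemma le_sqrt_of_amgm b c : 0 <= b -> 0 <= c ->
  (forall t, 0 < t -> 2 * t * b <= t * t + c) -> b <= sqrt c.
Proof.
intros Hb Hc H. pose proof (sqrt_sqrt c Hc). pose proof (sqrt_pos c).
destruct (Req_dec (sqrt c) 0) as [Z|Z].
- destruct (Req_dec b 0) as [->|Zb]; [lra|]. specialize (H b ltac:(lra)). nra.
- specialize (H (sqrt c) ltac:(lra)). nra.
Qed.

Lemma sumR_unit_cauchy_schwarz n x y : sumR n (fun a => x a ^ 2) = 1 ->
  Rabs (sumR n (fun a => x a * y a)) <= sqrt (sumR n (fun a => y a ^ 2)).
Proof.
intros Hx. apply le_sqrt_of_amgm; [apply Rabs_pos| |].
- rewrite <- (sumR_0 n). apply sumR_le. intros; apply pow2_ge_0.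
- intros t Ht.
  replace (t * t + sumR n (fun a => y a ^ 2))
    with (sumR n (fun a => t * t * x a ^ 2 + y a ^ 2))
    by (rewrite sumR_add, sumR_scal_l, Hx; ring).
  eapply Rle_trans; [apply Rmult_le_compat_l; [lra|apply Rabs_sumR_le]|].
  rewrite <- sumR_scal_l. apply sumR_le. intros a _.
  rewrite Rabs_mult, <- (pow2_abs (x a)), <- (pow2_abs (y a)).
  pose proof (pow2_ge_0 (t * Rabs (x a) - Rabs (y a))). nra.
Qed.

Lemma div_lt_of_lt_mul a m N : (a < N * m)%nat -> (a / m < N)%nat.
Proof. intros. apply Nat.Div0.div_lt_upper_bound. lia. Qed.

Lemma mul_add_mod_mul x q m N : (0 < N)%nat -> (q < m)%nat ->
  ((x * m + q) mod (N * m) = (x mod N) * m + q)%nat.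
Proof.
intros HN Hq. symmetry. apply Nat.mod_unique with (q := (x / N)%nat).
- pose proof (Nat.mod_bound_pos x N ltac:(lia) HN). nia.
- pose proof (Nat.div_mod_eq x N). nia.
Qed.

(* [(p + N - k) mod N] is the forward cyclic distance from [k] to [p]. *)
Lemma cyclic_shift_cases N p k : (p < N)%nat -> (k < N)%nat ->
  ((k <= p /\ (p + N - k) mod N = p - k) \/ (p < k /\ (p + N - k) mod N = p + N - k))%nat.
Proof.
intros Hp Hk. destruct (le_lt_dec k p) as [Hkp|Hpk].
- left. split; [exact Hkp|].
  replace (p + N - k)%nat with (p - k + 1 * N)%nat by lia.
  rewrite Nat.Div0.mod_add. apply Nat.mod_small. lia.
- right. split; [exact Hpk|]. apply Nat.mod_small. lia.
Qed.

Lemma cyclic_windows_overlap N p k k' n : (p < N)%nat -> (k < N)%nat -> (k' < N)%nat ->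
  ((p + N - k) mod N < n)%nat -> ((p + N - k') mod N < n)%nat ->
  ((k' + N - k) mod N < n \/ (k + N - k') mod N < n)%nat.
Proof.
intros Hp Hk Hk'.
destruct (cyclic_shift_cases N p k) as [[? ->]|[? ->]]; auto;
destruct (cyclic_shift_cases N p k') as [[? ->]|[? ->]]; auto;
destruct (cyclic_shift_cases N k' k) as [[? ->]|[? ->]]; auto;
destruct (cyclic_shift_cases N k k') as [[? ->]|[? ->]]; auto; lia.
Qed.

Lemma soft_eq0 b z : Rabs z < b -> soft b z = 0.
Proof.
intros H. unfold soft, Rabs in *. destruct (Rcase_abs z);
destruct (Rlt_dec z (- b)); try lra; destruct (Rle_dec z b); lra.
Qed.

Lemma soft_neq0 b z : 0 <= b -> b < Rabs z -> soft b z <> 0 /\ Rabs (z - soft b z) <= b.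
Proof.
intros Hb H. unfold soft, Rabs in *. destruct (Rcase_abs z);
destruct (Rlt_dec z (- b)); destruct (Rle_dec z b); try lra;
(split; [lra|]).
all: match goal with |- context [Rcase_abs ?x] => destruct (Rcase_abs x) end; lra.
Qed.

Lemma norm2p_opp N m n V W : (forall a, V a = - W a) -> norm2p N m n V = norm2p N m n W.
Proof.
intros HV. unfold norm2p. apply maxR_ext. intros j _. f_equal.
apply sumR_ext. intros a _. rewrite HV. destruct (in_patch N m n j a); ring.
Qed.

Lemma norm2p_le_sqrt_norm0p N m n G V B : 0 <= B ->
  (forall a, (a < N * m)%nat -> G a = 0 -> V a = 0) ->
  (forall a, (a < N * m)%nat -> Rabs (V a) <= B) ->
  norm2p N m n V <= sqrt (INR (norm0p N m n G)) * B.
Proof.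
intros HB Hoff HV. unfold norm2p. apply maxR_lub.
{ apply Rmult_le_pos; [apply sqrt_pos|exact HB]. }
intros j Hj. rewrite <- (sqrt_Rsqr B HB), <- sqrt_mult_alt by apply pos_INR.
apply sqrt_le_1_alt.
apply Rle_trans
  with (sumR (N * m) (fun a => if andb (in_patch N m n j a) (nz G a) then B² else 0)).
- apply sumR_le. intros a Ha.
  destruct (in_patch N m n j a); simpl andb; [|lra].
  destruct (nz G a) eqn:Ez.
  + rewrite <- Rsqr_pow2. apply Rsqr_le_abs_1. rewrite (Rabs_right B); [apply HV, Ha|lra].
  + rewrite (Hoff a Ha (proj1 (nz_false G a) Ez)). lra.
- rewrite sumR_cnt. apply Rmult_le_compat_r; [apply Rle_0_sqr|]. apply le_INR.
  apply (le_maxN N (fun j => cnt (N * m) (in_patch N m n j) G)), Hj.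
Qed.

Section ConvolutionalLayer.

Variables (N mp mc np : nat) (D : nat -> nat -> R).
Hypotheses (HN : (0 < N)%nat) (Hmp : (0 < mp)%nat).
Hypothesis Hconv : conv_dict N mp mc np D.
Hypothesis Hunit : unit_columns (N * mp) (N * mc) D.

Lemma atom_support_in_patch a c : (a < N * mp)%nat -> (c < N * mc)%nat -> D a c <> 0 ->
  in_patch N mp np (c / mc) a = true.
Proof.
intros Ha Hc HD. destruct Hconv as [f Hf]. rewrite Hf in HD by assumption. cbv zeta in HD.
destruct (Nat.ltb_spec ((a + N * mp - c / mc * mp) mod (N * mp)) (np * mp)) as [Ht|];
  [|lra].
apply Nat.ltb_lt. pose proof (div_lt_of_lt_mul c mc N Hc).
pose proof (Nat.div_mod_eq a mp). pose proof (Nat.mod_bound_pos a mp ltac:(lia) Hmp).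
pose proof (div_lt_of_lt_mul a mp N Ha).
set (p := (a / mp)%nat) in *. set (q := (a mod mp)%nat) in *. set (k := (c / mc)%nat) in *.
replace (a + N * mp - k * mp)%nat with ((p + N - k) * mp + q)%nat in Ht by nia.
rewrite mul_add_mod_mul in Ht by lia. nia.
Qed.

Lemma overlapping_atoms_in_stripe c c' : (c < N * mc)%nat -> (c' < N * mc)%nat ->
  gram (N * mp) D c c' <> 0 -> in_stripe N mc np (c / mc) c' = true.
Proof.
intros Hc Hc' Hg. apply Bool.not_false_iff_true. intros Es. apply Hg.
rewrite <- (sumR_0 (N * mp)). apply sumR_ext. intros a Ha.
destruct (Req_dec (D a c) 0) as [->|E]; [ring|].
destruct (Req_dec (D a c') 0) as [->|E']; [ring|].
exfalso. pose proof (atom_support_in_patch a c Ha Hc E) as P.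
pose proof (atom_support_in_patch a c' Ha Hc' E') as P'.
unfold in_patch, in_stripe in *. apply Nat.ltb_lt in P, P'.
apply Bool.orb_false_iff in Es as [E1 E2]. apply Nat.ltb_ge in E1, E2.
destruct (cyclic_windows_overlap N (a / mp) (c / mc) (c' / mc) np); auto using div_lt_of_lt_mul;
  lia.
Qed.

Lemma atom_dot_le_norm2p W c : (c < N * mc)%nat ->
  Rabs (sumR (N * mp) (fun a => D a c * W a)) <= norm2p N mp np W.
Proof.
intros Hc. set (j := (c / mc)%nat).
set (Wj := fun a => if in_patch N mp np j a then W a else 0).
rewrite (sumR_ext _ _ (fun a => D a c * Wj a)).
2:{ intros a Ha. unfold Wj. destruct (in_patch N mp np j a) eqn:Ep; [reflexivity|].
    destruct (Req_dec (D a c) 0) as [->|E]; [ring|].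
    pose proof (atom_support_in_patch a c Ha Hc E) as P. fold j in P. congruence. }
eapply Rle_trans; [apply (sumR_unit_cauchy_schwarz _ (fun a => D a c)), Hunit, Hc|].
unfold norm2p. eapply Rle_trans; [|apply (le_maxR N _ j), div_lt_of_lt_mul, Hc]. cbv beta.
right. f_equal. apply sumR_ext. intros a _. unfold Wj. destruct (in_patch N mp np j a); ring.
Qed.

Lemma interference_le G c : (0 < np)%nat -> (c < N * mc)%nat ->
  Rabs (sumR (N * mc) (fun c' => if Nat.eqb c' c then 0 else gram (N * mp) D c c' * G c')) <=
    mu (N * mp) (N * mc) D * gmax (N * mc) G *
      (INR (norm0s N mc np G) - (if nz G c then 1 else 0)).
Proof.
intros Hnp Hc. set (k := (c / mc)%nat).
set (b := mu (N * mp) (N * mc) D * gmax (N * mc) G).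
assert (Hb : 0 <= b) by (apply Rmult_le_pos; apply maxR_ge0).
set (g := fun c' => if andb (in_stripe N mc np k c') (nz G c') then b else 0).
assert (Hsum : Rabs (sumR (N * mc)
                 (fun c' => if Nat.eqb c' c then 0 else gram (N * mp) D c c' * G c'))
               <= sumR (N * mc) (fun c' => if Nat.eqb c' c then 0 else g c')).
{ eapply Rle_trans; [apply Rabs_sumR_le|]. apply sumR_le. intros c' Hc'.
  destruct (Nat.eqb_spec c' c); [rewrite Rabs_R0; lra|].
  unfold g. destruct (Req_dec (gram (N * mp) D c c') 0) as [Z|Z].
  { rewrite Z, Rmult_0_l, Rabs_R0. destruct (andb _ _); lra. }
  pose proof (overlapping_atoms_in_stripe c c' Hc Hc' Z) as Hs. fold k in Hs. rewrite Hs.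
  destruct (nz G c') eqn:Ez; simpl.
  - rewrite Rabs_mult. apply Rmult_le_compat; try apply Rabs_pos.
    + apply Rabs_gram_le_mu; auto.
    + apply Rabs_le_gmax, Hc'.
  - rewrite (proj1 (nz_false G c') Ez), Rmult_0_r, Rabs_R0. lra. }
assert (Hown : in_stripe N mc np k c = true).
{ unfold in_stripe. replace (k + N - c / mc)%nat with N by (unfold k; lia).
  rewrite Nat.Div0.mod_same. apply Bool.orb_true_iff. right. apply Nat.ltb_lt, Hnp. }
assert (Hcnt : INR (cnt (N * mc) (in_stripe N mc np k) G) <= INR (norm0s N mc np G)).
{ apply le_INR, (le_maxN N (fun j => cnt (N * mc) (in_stripe N mc np j) G)),
    div_lt_of_lt_mul, Hc. }
pose proof (sumR_D1 _ g c Hc) as Hsplit.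
rewrite (sumR_cnt _ _ _ b : sumR (N * mc) g = _) in Hsplit.
unfold g at 1 in Hsplit. rewrite Hown in Hsplit.
destruct (nz G c); simpl andb in Hsplit; nra.
Qed.

Lemma correlation_error G H W e c : (0 < np)%nat ->
  (forall a, (a < N * mp)%nat -> H a = apply_D (N * mc) D G a + W a) ->
  norm2p N mp np W <= e -> (c < N * mc)%nat ->
  Rabs (apply_DT (N * mp) D H c - G c) <=
    mu (N * mp) (N * mc) D * gmax (N * mc) G *
      (INR (norm0s N mc np G) - (if nz G c then 1 else 0)) + e.
Proof.
intros Hnp HH HW Hc.
assert (Hcc : gram (N * mp) D c c = 1).
{ rewrite <- (Hunit c Hc). apply sumR_ext. intros; ring. }
rewrite (apply_DT_apply_D _ _ _ _ _ _ _ HH), (sumR_D1 _ _ c Hc), Hcc.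
pose proof (interference_le G c Hnp Hc). pose proof (atom_dot_le_norm2p W c Hc).
eapply Rle_trans; [|apply Rplus_le_compat; [eassumption|eapply Rle_trans; eassumption]].
replace (_ - G c) with
  (sumR (N * mc) (fun c' => if Nat.eqb c' c then 0 else gram (N * mp) D c c' * G c')
   + sumR (N * mp) (fun a => D a c * W a)) by ring.
apply Rabs_triang.
Qed.

Section Thresholding.

Variables (G H W : nat -> R) (e beta : R).
Hypothesis Hnp : (0 < np)%nat.
Hypothesis HH : forall a, (a < N * mp)%nat -> H a = apply_D (N * mc) D G a + W a.
Hypothesis HW : norm2p N mp np W <= e.
Let s := INR (norm0s N mc np G).
Let mu0 := mu (N * mp) (N * mc) D.
Let gM := gmax (N * mc) G.
Hypothesis Hbeta_lt : gmin (N * mc) G - (s - 1) * mu0 * gM - e > beta.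
Hypothesis Hbeta_gt : beta > s * mu0 * gM + e.

Lemma thresholding_entry c : (c < N * mc)%nat ->
  (G c = 0 -> soft beta (apply_DT (N * mp) D H c) = 0) /\
  (G c <> 0 -> soft beta (apply_DT (N * mp) D H c) <> 0 /\
     Rabs (G c - soft beta (apply_DT (N * mp) D H c)) <= e + mu0 * (s - 1) * gM + beta).
Proof.
intros Hc. pose proof (correlation_error G H W e c Hnp HH HW Hc) as Herr.
fold s mu0 gM in Herr. set (z := apply_DT (N * mp) D H c) in *.
assert (Hmu0 : 0 <= mu0) by apply maxR_ge0.
assert (HgM : 0 <= gM) by apply maxR_ge0.
assert (Hs : 0 <= s) by apply pos_INR.
assert (Hprod : 0 <= s * mu0 * gM) by (apply Rmult_le_pos; [apply Rmult_le_pos|]; assumption).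
split.
- intros Z. rewrite (proj2 (nz_false G c) Z), Z, Rminus_0_r in Herr.
  apply soft_eq0. nra.
- intros Z. rewrite (proj2 (nz_spec G c) Z) in Herr.
  assert (Hmin : gmin (N * mc) G <= Rabs (G c)) by exact (minnz_aux_le _ _ _ c Hc Z).
  pose proof (Rabs_triang_inv (G c) (G c - z)) as Htri.
  replace (G c - (G c - z)) with z in Htri by ring.
  rewrite <- Rabs_Ropp in Herr. replace (- (z - G c)) with (G c - z) in Herr by ring.
  assert (He : 0 <= e) by (eapply Rle_trans; [apply maxR_ge0|exact HW]).
  destruct (soft_neq0 beta z) as [Hsz Hdz]; [lra|lra|].
  split; [exact Hsz|].
  replace (G c - soft beta z) with ((G c - z) + (z - soft beta z)) by ring.
  eapply Rle_trans; [apply Rabs_triang|]. nra.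
Qed.

Lemma layer_step nc : (exists c, (c < N * mc)%nat /\ G c <> 0) ->
  (forall c, (c < N * mc)%nat -> (G c <> 0 <-> soft beta (apply_DT (N * mp) D H c) <> 0)) /\
  norm2p N mc nc (fun c => G c - soft beta (apply_DT (N * mp) D H c)) <=
    sqrt (INR (norm0p N mc nc G)) * (e + mu0 * (s - 1) * gM + beta).
Proof.
intros [c0 [Hc0 Gc0]].
assert (HB : 0 <= e + mu0 * (s - 1) * gM + beta).
{ destruct (thresholding_entry c0 Hc0) as [_ [_ Hd]]; [exact Gc0|].
  eapply Rle_trans; [apply Rabs_pos|exact Hd]. }
split.
- intros c Hc. destruct (thresholding_entry c Hc) as [Hoff Hon]. split.
  + intros Z. exact (proj1 (Hon Z)).
  + intros Z E. exact (Z (Hoff E)).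
- apply norm2p_le_sqrt_norm0p; [exact HB| |].
  + intros c Hc Z. destruct (thresholding_entry c Hc) as [Hoff _].
    rewrite Z, Hoff by exact Z. ring.
  + intros c Hc. destruct (Req_dec (G c) 0) as [Z|Z].
    * destruct (thresholding_entry c Hc) as [Hoff _].
      rewrite Z, Hoff, Rminus_0_r, Rabs_R0 by exact Z. exact HB.
    * exact (proj2 (proj2 (thresholding_entry c Hc) Z)).
Qed.

End Thresholding.

End ConvolutionalLayer.
Theorem theorem4
  (N K : nat) (m n : nat -> nat) (D : nat -> nat -> nat -> R)
  (X Y E : nat -> R) (Gamma : nat -> nat -> R) (beta : nat -> R) (eps0 : R)
  (HN : (0 < N)%nat)
  (Hm0 : m O = 1%nat)
  (Hm : forall i, (i <= K)%nat -> (0 < m i)%nat)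
  (Hn : forall i, (i < K)%nat -> (0 < n i)%nat /\ (n i <= N)%nat)
  (HDconv : forall i, (1 <= i <= K)%nat -> conv_dict N (m (i - 1)%nat) (m i) (n (i - 1)%nat) (D i))
  (HDunit : forall i, (1 <= i <= K)%nat -> unit_columns (N * m (i - 1)%nat) (N * m i) (D i))
  (HX : forall a, (a < N)%nat -> X a = apply_D (N * m 1%nat) (D 1%nat) (Gamma 1%nat) a)
  (HG : forall i, (2 <= i <= K)%nat -> forall a, (a < N * m (i - 1)%nat)%nat ->
          Gamma (i - 1)%nat a = apply_D (N * m i) (D i) (Gamma i) a)
  (Hnz : forall i, (1 <= i <= K)%nat -> exists a, (a < N * m i)%nat /\ Gamma i a <> 0)
  (HY : forall a, (a < N)%nat -> Y a = X a + E a)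
  (HE : norm2p N (m O) (n O) E <= eps0)
  (Ha : forall i, (1 <= i <= K)%nat ->
     0 < mu (N * m (i - 1)%nat) (N * m i) (D i) ->
     INR (norm0s N (m i) (n (i - 1)%nat) (Gamma i)) <
       / 2 * (1 + / mu (N * m (i - 1)%nat) (N * m i) (D i)
                  * (gmin (N * m i) (Gamma i) / gmax (N * m i) (Gamma i)))
       - / mu (N * m (i - 1)%nat) (N * m i) (D i)
         * (eps N m n D beta Gamma eps0 (i - 1)%nat / gmax (N * m i) (Gamma i)))
  (Hb : forall i, (1 <= i <= K)%nat ->
     gmin (N * m i) (Gamma i)
       - (INR (norm0s N (m i) (n (i - 1)%nat) (Gamma i)) - 1)
         * mu (N * m (i - 1)%nat) (N * m i) (D i) * gmax (N * m i) (Gamma i)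
       - eps N m n D beta Gamma eps0 (i - 1)%nat > beta i /\
     beta i > INR (norm0s N (m i) (n (i - 1)%nat) (Gamma i))
         * mu (N * m (i - 1)%nat) (N * m i) (D i) * gmax (N * m i) (Gamma i)
       + eps N m n D beta Gamma eps0 (i - 1)%nat) :
  forall i, (1 <= i <= K)%nat ->
    (forall a, (a < N * m i)%nat ->
       (Gamma i a <> 0 <-> layered N m D beta Y i a <> 0)) /\
    norm2p N (m i) (n i) (fun a => Gamma i a - layered N m D beta Y i a)
      <= eps N m n D beta Gamma eps0 i.
Proof.
intros [|i] Hi; [lia|]. induction i as [|i IH].
- assert (H1 : (1 <= 1 <= K)%nat) by lia.
  pose proof (HDconv 1%nat H1) as Hconv. pose proof (HDunit 1%nat H1) as Hunit.
  destruct (Hb 1%nat H1) as [Hb1 Hb2]. change (1 - 1)%nat with O in *.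
  apply (layer_step N (m O) (m 1%nat) (n O) (D 1%nat) HN ltac:(apply Hm; lia)
           Hconv Hunit _ _ E); auto.
  + destruct (Hn O ltac:(lia)); lia.
  + rewrite Hm0, Nat.mul_1_r. intros a Hlt. rewrite HY, HX by exact Hlt. reflexivity.
- assert (Hi' : (1 <= S (S i) <= K)%nat) by lia.
  destruct (IH ltac:(lia)) as [_ Herr].
  pose proof (HDconv _ Hi') as Hconv. pose proof (HDunit _ Hi') as Hunit.
  destruct (Hb _ Hi') as [Hb1 Hb2]. pose proof (HG (S (S i)) ltac:(lia)) as HGi.
  replace (S (S i) - 1)%nat with (S i) in * by lia.
  apply (layer_step N (m (S i)) (m (S (S i))) (n (S i)) (D (S (S i))) HN
           ltac:(apply Hm; lia) Hconv Hunit
           (Gamma (S (S i))) (layered N m D beta Y (S i))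
           (fun a => layered N m D beta Y (S i) a - Gamma (S i) a)); auto.
  + destruct (Hn (S i) ltac:(lia)); lia.
  + intros a Hlt. rewrite <- HGi by exact Hlt. ring.
  + rewrite (norm2p_opp _ _ _ _ (fun a => Gamma (S i) a - layered N m D beta Y (S i) a));
      [exact Herr|intros; ring].
Qed.
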